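(* Assume (A3). Then, almost surely in $X_1,\dots,X_n$, for every $\delta>0$, $$\mathbb E_\varepsilon\Big[\sup_{f\in\mathcal F_b,\ \mathbb E_n[\xi_f^2(X)]\le\delta}\frac1n\sum_{i=1}^n\varepsilon_i\xi_f(X_i)\Big]\le\sqrt{10}\,(\|f_{\mathcal H}\|_K\vee1)\,\widehat R_x(\delta).$$
   Context: $\mathcal Z\subseteq\mathbb R^r$, $\mathcal X\subseteq\mathbb R^p$; $Z$ random in $\mathcal Z$ with law $\rho$, $\mathcal L^2(\rho)$ with $\langle\cdot,\cdot\rangle_\rho$; $K$ a kernel on $\mathcal Z$ with RKHS $\mathcal H_K$ and norm $\|\cdot\|_K$; $f_{\mathcal H}\in\mathcal H_K$ fixed. (A3) $L_Kf=\int K(z,\cdot)f(z)d\rho(z)=\sum_j\mu_j\langle\phi_j,f\rangle_\rho\phi_j$ with nonincreasing $\mu_j\ge0$, $\mu_1>0$, $\{\phi_j\}$ orthonormal basis of $\mathcal L^2(\rho)$. $\widehat g:\mathcal X\to\mathcal Z$ fixed measurable; $X_1,\dots,X_n$ points of $\mathcal X$; $\mathbb E_n[F(X)]=\frac1n\sum_iF(X_i)$. $\mathcal F_b=\{f\in\mathcal H_K:\|f-f_{\mathcal H}\|_K\le3\|f_{\mathcal H}\|_K\}$; $\xi_f(x)=f(\widehat g(x))-f_{\mathcal H}(\widehat g(x))$. $\varepsilon_1,\dots,\varepsilon_n$ are i.i.d. Rademacher signs and $\mathbb E_\varepsilon$ is expectation over them only. $\mathbf K_x$ is the $n\times n$ matrix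 with entries $n^{-1}K(\widehat g(X_i),\widehat g(X_j))$, eigenvalues $\widehat\mu_{x,1}\ge\dots\ge\widehat\mu_{x,n}$, and $\widehat R_x(\delta)=(\frac1n\sum_{j=1}^n\min\{\delta,\widehat\mu_{x,j}\})^{1/2}$. *)

From HB Require Import structures.
From mathcomp Require Import all_boot all_order all_algebra.
From mathcomp Require Import all_classical all_reals all_analysis.
Set Implicit Arguments. Unset Strict Implicit. Unset Printing Implicit Defensive.
Import Order.TTheory GRing.Theory Num.Theory.
Local Open Scope classical_set_scope.
Local Open Scope ring_scope.

Section Defs.
Variable R : realType.

Definition is_RKHS (Z : Type) (K : Z -> Z -> R) (HK : set (Z -> R))
    (ip : (Z -> R) -> (Z -> R) -> R) : Prop :=
  ((
      HK (fun _ => 0)) /\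
      ((forall f g, HK f -> HK g -> HK (fun z => f z + g z))) /\
      ((forall (a : R) f, HK f -> HK (fun z => a * f z))) /\
      (
      (forall f g, HK f -> HK g -> ip f g = ip g f)) /\
      ((forall f g h, HK f -> HK g -> HK h ->
          ip (fun z => f z + g z) h = ip f h + ip g h)) /\
      ((forall (a : R) f g, HK f -> HK g -> ip (fun z => a * f z) g = a * ip f g)) /\
      ((forall f, HK f -> 0 <= ip f f)) /\
      ((forall f, HK f -> ip f f = 0 -> f = (fun _ => 0))) /\
      (
      (forall u : nat -> (Z -> R), (forall k, HK (u k)) ->
         (forall e : R, 0 < e -> exists N, forall k m, (N <= k)%N -> (N <= m)%N ->
            Num.sqrt (ip (fun z => u k z - u m z) (fun z => u k z - u m z)) < e) ->
         exists l, HK l /\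
           (forall e : R, 0 < e -> exists N, forall k, (N <= k)%N ->
            Num.sqrt (ip (fun z => u k z - l z) (fun z => u k z - l z)) < e))) /\
      (
      (forall z, HK (K z))) /\
      (
      (forall f z, HK f -> ip f (K z) = f z))).

Definition normK (Z : Type) (ip : (Z -> R) -> (Z -> R) -> R) (f : Z -> R) : R :=
  Num.sqrt (ip f f).

Definition ip_rho d (Z : measurableType d) (rho : probability Z R)
    (f g : Z -> R) : R :=
  fine (\int[rho]_z (f z * g z)%:E)%E.

Definition L2 d (Z : measurableType d) (rho : probability Z R) (f : Z -> R) : Prop :=
  measurable_fun setT f /\ rho.-integrable setT (fun z => (f z ^+ 2)%:E).

Definition LK d (Z : measurableType d) (rho : probability Z R)
    (K : Z -> Z -> R) (f : Z -> R) : Z -> R :=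
  fun z' => fine (\int[rho]_z (K z z' * f z)%:E)%E.

Definition assumption_A3 d (Z : measurableType d) (rho : probability Z R)
    (K : Z -> Z -> R) (mu : nat -> R) (phi : nat -> Z -> R) : Prop :=
  (((forall j, 0 <= mu j)) /\
      ((forall j k, (j <= k)%N -> mu k <= mu j)) /\
      (0 < mu 0%N) /\
      (
      (forall j, L2 rho (phi j))) /\
      ((forall j k, ip_rho rho (phi j) (phi k) = (j == k)%:R)) /\
      (
      (forall f, L2 rho f -> (forall j, ip_rho rho (phi j) f = 0) ->
          ip_rho rho f f = 0)) /\
      (
      (forall f, L2 rho f ->
         L2 rho (LK rho K f) /\
         (fun N : nat =>
            let r := fun z => LK rho K f z -
                      \sum_(j < N) mu j * ip_rho rho (phi j) f * phi j z in
            ip_rho rho r r) @ \oo --> 0))).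

Definition En (X : Type) (n : nat) (Xs : 'I_n -> X) (F : X -> R) : R :=
  n%:R^-1 * \sum_(i < n) F (Xs i).

Definition sgn (b : bool) : R := if b then 1 else -1.

Definition local_rademacher (Z X : Type) (HK : set (Z -> R))
    (ip : (Z -> R) -> (Z -> R) -> R) (fH : Z -> R) (ghat : X -> Z)
    (n : nat) (Xs : 'I_n -> X) (delta : R) : \bar R :=
  let xi := fun f x => f (ghat x) - fH (ghat x) in
  let Fb := [set f | HK f /\
               normK ip (fun z => f z - fH z) <= 3 * normK ip fH] in
  let val := fun (s : {ffun 'I_n -> bool}) (f : Z -> R) =>
        n%:R^-1 * \sum_(i < n) sgn (s i) * xi f (Xs i) in
  let loc := [set f | Fb f /\ En Xs (fun x => xi f x ^+ 2) <= delta] in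
  ((2%:R ^- n)%:E *
   \sum_(s : {ffun 'I_n -> bool})
     ereal_sup [set (val s f)%:E | f in loc])%E.

Definition Kmat (Z X : Type) (K : Z -> Z -> R) (ghat : X -> Z)
    (n : nat) (Xs : 'I_n -> X) : 'M[R]_n :=
  \matrix_(i, j) (n%:R^-1 * K (ghat (Xs i)) (ghat (Xs j))).

Definition Rhat (n : nat) (muhat : 'I_n -> R) (delta : R) : R :=
  Num.sqrt (n%:R^-1 * \sum_(j < n) Num.min delta (muhat j)).

End Defs.

(* Fix signs e and write A for the normalised kernel matrix, g = |f_H|_K^2 and
   Psi = (delta + g A)^-1.  Split e = (e - r) + r with r = delta e Psi.  For
   h = f - f_H in the local class, the pairing of e - r with h is controlled by
   Cauchy-Schwarz and sum_i h(X_i)^2 <= n delta, the pairing of r with h by the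
   reproducing property and |h|_K^2 <= 9 g; together
   (sum_i e_i h(X_i))^2 <= 10 n (delta e e^T - delta^2 e Psi e^T).
   Averaging over the signs turns these quadratic forms into traces, and
   tr Psi = sum_j 1/(delta + g mu_j), so the average is at most
   10 n sum_j delta g mu_j / (delta + g mu_j) <= 10 n (g \/ 1) sum_j min(delta, mu_j).
   Jensen's inequality for the square root concludes. *)

From mathcomp Require Import all_boot all_order all_algebra.
From mathcomp Require Import all_classical all_reals all_analysis.
From mathcomp Require Import complex spectral.
From mathcomp Require Import ring lra.

Set Implicit Arguments.
Unset Strict Implicit.
Unset Printing Implicit Defensive.

Import Order.TTheory GRing.Theory Num.Theory.
Local Open Scope classical_set_scope.
Local Open Scope ring_scope.

Section RealInequalities.
Variable R : rcfType.

Lemma discriminant_le (a b c : R) : 0 <= c ->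
  (forall t, 0 <= a + 2 * b * t + c * t ^+ 2) -> b ^+ 2 <= a * c.
Proof.
move=> c_ge0 q_ge0; have a_ge0 : 0 <= a by have := q_ge0 0; rewrite !(mulr0, expr0n, addr0).
have [c0|c_neq0] := eqVneq c 0.
  have [->|b_neq0] := eqVneq b 0; first by rewrite expr0n /= mulr_ge0.
  have := q_ge0 (- (a + 1) / (2 * b)); rewrite c0 mul0r addr0.
  have -> : 2 * b * (- (a + 1) / (2 * b)) = - (a + 1) by field.
  by rewrite opprD addrA subrr sub0r oppr_ge0 ler10.
have c_gt0 : 0 < c by rewrite lt_def c_neq0.
have := q_ge0 (- b / c).
have -> : a + 2 * b * (- b / c) + c * (- b / c) ^+ 2 = a - b ^+ 2 / c by field.
by rewrite subr_ge0 ler_pdivrMr // mulrC.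
Qed.

Lemma sum_mul_sqr_le (I : finType) (u v : I -> R) :
  (\sum_i u i * v i) ^+ 2 <= (\sum_i u i ^+ 2) * (\sum_i v i ^+ 2).
Proof.
rewrite mulrC; apply: discriminant_le => [|t].
  by apply: sumr_ge0 => i _; exact: sqr_ge0.
have -> : \sum_i v i ^+ 2 + 2 * (\sum_i u i * v i) * t + (\sum_i u i ^+ 2) * t ^+ 2
    = \sum_i (v i + t * u i) ^+ 2.
  by rewrite mulr_sumr !mulr_suml -!big_split /=; apply: eq_bigr => i _; ring.
by apply: sumr_ge0 => i _; exact: sqr_ge0.
Qed.

Lemma ler_sqrt_sqr (x y : R) : x ^+ 2 <= y -> x <= Num.sqrt y.
Proof. by move=> xy; rewrite (le_trans (ler_norm x)) // -sqrtr_sqr ler_wsqrtr. Qed.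

Lemma sum_sqrtr_le (I : finType) (x : I -> R) : (forall i, 0 <= x i) ->
  \sum_i Num.sqrt (x i) <= Num.sqrt (#|I|%:R * \sum_i x i).
Proof.
move=> x_ge0; apply: ler_sqrt_sqr.
have := sum_mul_sqr_le (fun=> 1) (fun i => Num.sqrt (x i)).
rewrite sumr_const expr1n.
under eq_bigr do rewrite mul1r.
by under [X in _ * X]eq_bigr do rewrite sqr_sqrtr //.
Qed.

Lemma resolvent_term_le (de ga mu : R) : 0 < de -> 0 <= ga -> 0 <= mu ->
  de - de ^+ 2 / (de + ga * mu) <= Num.max ga 1 * Num.min de mu.
Proof.
move=> de_gt0 ga_ge0 mu_ge0; have gamu_ge0 : 0 <= ga * mu by rewrite mulr_ge0.
have den_gt0 : 0 < de + ga * mu by rewrite ltr_pwDl.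
have -> : de - de ^+ 2 / (de + ga * mu) = de * (ga * mu) / (de + ga * mu).
  by field; rewrite gt_eqF.
rewrite ler_pdivrMr //.
have demu_ge0 : 0 <= de * mu by rewrite mulr_ge0 // ltW.
have [ga_le1|ga_gt1] := leP ga 1; have [] := leP de mu => _.
- by rewrite mul1r ler_pM2l // lerDr ltW.
- have : 0 <= (1 - ga) * (de * mu) by rewrite mulr_ge0 // subr_ge0.
  have : 0 <= ga * mu * mu by rewrite mulr_ge0.
  nra.
- have : 0 <= (ga - 1) * (de * ga * mu) by rewrite !mulr_ge0 ?subr_ge0 // ltW.
  have : 0 <= ga * de * de by rewrite !mulr_ge0 // ltW.
  nra.
- have : 0 <= (ga * mu) ^+ 2 by exact: sqr_ge0.
  nra.
Qed.

Lemma mean_sqrtr_le (I : finType) (x : I -> R) : (forall i, 0 <= x i) ->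
  #|I|%:R^-1 * \sum_i Num.sqrt (x i) <= Num.sqrt (#|I|%:R^-1 * \sum_i x i).
Proof.
move=> x_ge0; have N_ge0 : 0 <= #|I|%:R^-1 :> R by rewrite invr_ge0.
apply: le_trans (ler_wpM2l N_ge0 (sum_sqrtr_le x_ge0)) _.
rewrite -[X in X * _](ger0_norm N_ge0) -sqrtr_sqr -sqrtrM ?sqr_ge0 // ler_wsqrtr //.
have [->|N_neq0] := eqVneq (#|I|%:R : R) 0; first by rewrite invr0 !mul0r.
by rewrite expr2 -mulrA mulKf.
Qed.

Lemma invr_mul_sqrtr (a x : R) : 0 < a ->
  a^-1 * Num.sqrt (a * x) = Num.sqrt (a^-1 * x).
Proof.
move=> a_gt0; have aV_ge0 : 0 <= a^-1 by rewrite invr_ge0 ltW.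
rewrite -[X in X * _](ger0_norm aV_ge0) -sqrtr_sqr -sqrtrM ?sqr_ge0 //.
by rewrite expr2 -mulrA mulKf ?gt_eqF.
Qed.

Lemma mean_scaled_sqrtr_le (I : finType) (V : I -> R) (n : nat) (c M S : R) :
  (0 < #|I|)%N -> (0 < n)%N -> 0 <= c -> 0 <= M -> (forall i, 0 <= V i) ->
  \sum_i V i <= #|I|%:R * (M ^+ 2 * S) ->
  #|I|%:R^-1 * \sum_i n%:R^-1 * Num.sqrt (c * n%:R * V i)
    <= Num.sqrt c * M * Num.sqrt (n%:R^-1 * S).
Proof.
move=> I_gt0 n_gt0 c_ge0 M_ge0 V_ge0 sum_V_le; have n_gt0' : 0 < n%:R :> R by rewrite ltr0n.
under eq_bigr do rewrite (mulrC c) -mulrA invr_mul_sqrtr //.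
apply: le_trans (mean_sqrtr_le _) _ => [i|].
  by rewrite !mulr_ge0 ?invr_ge0 ?ler0n ?V_ge0.
rewrite -!mulr_sumr -(ger0_norm M_ge0) -sqrtr_sqr -!sqrtrM ?mulr_ge0 ?sqr_ge0 //.
rewrite ler_wsqrtr //.
have -> : c * M ^+ 2 * (n%:R^-1 * S)
    = #|I|%:R^-1 * (n%:R^-1 * (c * (#|I|%:R * (M ^+ 2 * S)))).
  by field; rewrite !gt_eqF // ltr0n.
by do 3!(apply: ler_wpM2l; first by rewrite ?invr_ge0 ?ler0n).
Qed.

Lemma sqr_max1 (x : R) : 0 <= x -> Num.max x 1 ^+ 2 = Num.max (x ^+ 2) 1.
Proof.
move=> x_ge0; have [x_le1|x_gt1] := leP x 1.
  by rewrite expr1n max_r // -(expr1n _ 2) lerXn2r ?nnegrE.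
by rewrite max_l // ltW // -(expr1n _ 2) ltrXn2r.
Qed.

End RealInequalities.

Lemma quad_formE (R : comPzRingType) n (x y : 'rV[R]_n) (M : 'M[R]_n) :
  (x *m M *m y^T) 0 0 = \sum_i \sum_j x 0 i * y 0 j * M i j.
Proof.
rewrite mxE exchange_big /=; apply: eq_bigr => j _.
by rewrite mxE mulr_suml; apply: eq_bigr => i _; rewrite !mxE; ring.
Qed.

Definition sign_row {R : realType} {n} (s : {ffun 'I_n -> bool}) : 'rV[R]_n :=
  \row_i sgn R (s i).

Section RademacherAverages.
Variables (R : realType) (n : nat).

Lemma sum_sgn_mul (i j : 'I_n) :
  \sum_(s : {ffun 'I_n -> bool}) sgn R (s i) * sgn R (s j) = (i == j)%:R * 2 ^+ n.
Proof.
have [<-|nij] := eqVneq i j.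
  have sgn_sqr b : sgn R b * sgn R b = 1 by case: b; rewrite /sgn ?mulrNN mulr1.
  under eq_bigr do rewrite sgn_sqr.
  by rewrite sumr_const card_ffun card_bool card_ord mul1r natrX.
(* Flipping the i-th sign is an involution that negates every term. *)
pose flip (s : {ffun 'I_n -> bool}) := [ffun k => (k == i) (+) s k].
have flipK : involutive flip.
  by move=> s; apply/ffunP => k; rewrite !ffunE addbA addbb.
set S := (X in X = _); have S_oppr : S = - S.
  rewrite {1}/S (reindex_inj (inv_inj flipK)) -sumrN; apply: eq_bigr => s _.
  rewrite !ffunE eqxx eq_sym (negPf nij) /=.
  by case: (s i); case: (s j); rewrite /sgn /=; ring.
have /eqP : S *+ 2 = 0 by rewrite mulr2n {1}S_oppr addNr.
by rewrite -mulr_natl mulf_eq0 pnatr_eq0 /= => /eqP ->; rewrite mul0r.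
Qed.

Lemma sum_sign_quad_form (M : 'M[R]_n) :
  \sum_(s : {ffun 'I_n -> bool}) (sign_row s *m M *m (sign_row s)^T) 0 0
    = 2 ^+ n * \tr M.
Proof.
have sum_entry i j : \sum_(s : {ffun 'I_n -> bool}) sign_row s 0 i * sign_row s 0 j * M i j
    = (i == j)%:R * 2 ^+ n * M i j.
  by rewrite -mulr_suml; under eq_bigr do rewrite !mxE; rewrite sum_sgn_mul.
under eq_bigr do rewrite quad_formE.
rewrite exchange_big /= /mxtrace mulr_sumr; apply: eq_bigr => i _.
rewrite exchange_big /= (bigD1 i) //= [X in _ + X]big1 ?addr0 => [|j nji].
  by rewrite sum_entry eqxx mul1r.
by rewrite sum_entry eq_sym (negPf nji) !mul0r.
Qed.
End RademacherAverages.

Lemma char_poly_conj (F : fieldType) n (P D : 'M[F]_n) : P \in unitmx ->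
  char_poly (invmx P *m D *m P) = char_poly D.
Proof.
move=> Pu; rewrite /char_poly /char_poly_mx.
set Pp := map_mx polyC P; set Pi := map_mx polyC (invmx P).
have PiP : Pi *m Pp = 1%:M by rewrite -map_mxM mulVmx // map_mx1.
have -> : 'X%:M - map_mx polyC (invmx P *m D *m P)
    = Pi *m ('X%:M - map_mx polyC D) *m Pp.
  rewrite !map_mxM mulmxBr mulmxBl -!mulmxA; congr (_ - _).
  by rewrite mul_scalar_mx -scalemxAr PiP scalemx1.
by rewrite !det_mulmx mulrAC -det_mulmx PiP det1 mul1r.
Qed.

Lemma mxtrace_inv_conj_diag (F : fieldType) n (P : 'M[F]_n) (d : 'rV[F]_n) :
  P \in unitmx -> (forall j, d 0 j != 0) ->
  invmx P *m diag_mx d *m P \in unitmx /\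
  \tr (invmx (invmx P *m diag_mx d *m P)) = \sum_j (d 0 j)^-1.
Proof.
move=> Pu d_neq0; set M := invmx P *m diag_mx d *m P.
pose dV := \row_j (d 0 j)^-1.
have d_dV : diag_mx d *m diag_mx dV = 1%:M.
  apply/matrixP => i j; rewrite mul_diag_mx !mxE.
  by have [->|_] := eqVneq i j; rewrite ?mulr1n ?mulfV ?mulr0n ?mulr0.
have M_MV : M *m (invmx P *m diag_mx dV *m P) = 1%:M.
  rewrite /M -!mulmxA (mulmxA P) mulmxV // mul1mx (mulmxA (diag_mx d)) d_dV.
  by rewrite mul1mx mulVmx.
have [Mu _] := mulmx1_unit M_MV; split=> //.
have -> : invmx M = invmx P *m diag_mx dV *m P.
  by rewrite -[RHS](mulKmx Mu) M_MV mulmx1.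
rewrite -mulmxA mxtrace_mulC -mulmxA.
by rewrite mulmxV // mulmx1 mxtrace_diag; apply: eq_bigr => j _; rewrite mxE.
Qed.

Lemma symmetric_real_diagonalization (R : realType) n (A : 'M[R]_n)
    (mu : 'I_n -> R) :
  A^T = A -> char_poly A = \prod_j ('X - (mu j)%:P) ->
  exists P d, [/\ P \in unitmx,
    map_mx (real_complex R) A = invmx P *m diag_mx d *m P &
    perm_eq [seq d 0 j | j <- index_enum 'I_n]
            [seq real_complex R (mu j) | j <- index_enum 'I_n]].
Proof.
move=> A_sym A_char; pose Ac := map_mx (real_complex R) A.
have Ac_normal : Ac \is normalmx.
  apply: symmetric_normalmx.
    by apply/is_hermitianmxP; rewrite expr0 scale1r map_mx_id // /Ac map_trmx A_sym.
  by apply/mxOverP => i j; rewrite mxE; apply/complex_realP; exists (A i j).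
have Pu : spectralmx Ac \in unitmx by exact: spectral_unit.
move/orthomx_spectralP: Ac_normal; set P := spectralmx Ac; set d := spectral_diag Ac.
move=> AcE; exists P, d; split=> //; apply: prod_XsubC_eq; rewrite !big_map.
have -> : \prod_(j <- index_enum 'I_n) ('X - (d 0 j)%:P) = char_poly Ac.
  rewrite AcE char_poly_conj // char_poly_trig ?diag_mx_is_trig //.
  by apply: eq_bigr => j _; rewrite mxE eqxx mulr1n.
by rewrite -map_char_poly A_char map_prod_XsubC.
Qed.

Lemma mxtrace_inv_shift (R : realType) n (A : 'M[R]_n) (mu : 'I_n -> R) (a b : R) :
  A^T = A -> char_poly A = \prod_j ('X - (mu j)%:P) ->
  (forall j, a + b * mu j != 0) ->
  (a%:M + b *: A) \in unitmx /\
  \tr (invmx (a%:M + b *: A)) = \sum_j (a + b * mu j)^-1.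
Proof.
move=> A_sym A_char ab_neq0; pose toC := real_complex R.
have [P [d [Pu AcE d_perm]]] := symmetric_real_diagonalization A_sym A_char.
pose w := \row_j (toC a + toC b * d 0 j).
have w_neq0 j : w 0 j != 0.
  have : d 0 j \in [seq toC (mu k) | k <- index_enum 'I_n].
    by rewrite -(perm_mem d_perm); apply: map_f; rewrite mem_index_enum.
  by case/mapP => k _ djE; rewrite mxE djE -rmorphM -rmorphD fmorph_eq0.
have BcE : map_mx toC (a%:M + b *: A) = invmx P *m diag_mx w *m P.
  rewrite map_mxD map_scalar_mx map_mxZ AcE.
  have -> : diag_mx w = (toC a)%:M + toC b *: diag_mx d.
    apply/matrixP => i j; rewrite !mxE.
    by have [->|_] := eqVneq i j; rewrite ?mulr1n ?mulr0n ?mulr0 ?addr0 ?mxE.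
  rewrite mulmxDr mulmxDl -scalemxAr -scalemxAl mul_mx_scalar -scalemxAl.
  by rewrite mulVmx // scalemx1.
have [Bcu Bc_tr] := mxtrace_inv_conj_diag Pu w_neq0.
rewrite -BcE map_unitmx in Bcu; split=> //; apply: (@complexI R).
rewrite -trace_map_mx map_invmx BcE Bc_tr rmorph_sum.
transitivity (\sum_(x <- [seq d 0 j | j <- index_enum 'I_n]) (toC a + toC b * x)^-1).
  by rewrite big_map; apply: eq_bigr => j _; rewrite mxE.
by rewrite (perm_big _ d_perm) big_map; apply: eq_bigr => j _; rewrite fmorphV rmorphD rmorphM.
Qed.

Lemma psd_eigenvalue_ge0 (R : realFieldType) n (A : 'M[R]_n) (mu : 'I_n -> R) :
  (forall x : 'rV_n, 0 <= (x *m A *m x^T) 0 0) ->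
  char_poly A = \prod_j ('X - (mu j)%:P) -> forall j, 0 <= mu j.
Proof.
move=> A_psd A_char j.
have : eigenvalue A (mu j).
  rewrite eigenvalue_root_char A_char -(big_map mu predT (fun x => 'X - x%:P)).
  by rewrite root_prod_XsubC map_f ?mem_index_enum.
case/eigenvalueP => v vA v_neq0.
have vv_gt0 : 0 < (v *m v^T) 0 0.
  rewrite mxE; have [i vi_neq0] : exists i, v 0 i != 0.
    apply/existsP; apply: contraR v_neq0 => /existsPn v0.
    by apply/eqP/rowP => k; rewrite mxE; apply/eqP/negPn/v0.
  rewrite (bigD1 i) //= mxE ltr_pwDl ?sumr_ge0 // => [|k _].
    by rewrite -expr2 lt_def sqr_ge0 sqrf_eq0 vi_neq0.
  by rewrite mxE -expr2 sqr_ge0.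
by have := A_psd v; rewrite vA -scalemxAl mxE pmulr_lge0.
Qed.

Section ResolventEnergy.
Variables (R : realType) (n : nat) (A : 'M[R]_n) (de ga : R).

Let Psi := invmx (de%:M + ga *: A).

Definition resolvent_energy (e : 'rV[R]_n) : R :=
  let r := de *: (e *m Psi) in
  de * ((e - r) *m (e - r)^T) 0 0 + ga * (r *m A *m r^T) 0 0.

Lemma resolvent_energyE e : de%:M + ga *: A \in unitmx ->
  resolvent_energy e = de * (e *m e^T) 0 0 - de ^+ 2 * (e *m Psi *m e^T) 0 0.
Proof.
move=> Bu; rewrite /resolvent_energy; set w := e *m Psi.
have wB : w *m (de%:M + ga *: A) = e by rewrite -mulmxA mulVmx // mulmx1.
have wAw : ga * (w *m A *m w^T) 0 0 = (e *m w^T) 0 0 - de * (w *m w^T) 0 0.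
  by rewrite -wB mulmxDr mul_mx_scalar -scalemxAr mulmxDl -!scalemxAl !mxE; ring.
have eww : (e *m w^T) 0 0 = (w *m e^T) 0 0.
  by transitivity ((e *m w^T)^T 0 0); [rewrite [RHS]mxE | rewrite trmx_mul trmxK].
move: eww wAw; rewrite !linearB /= !linearZ /= !mulmxDl -!scalemxAl !mulNmx !mxE.
set SA := \sum_j (w *m A) 0 j * _ => -> wAw.
have -> : ga * (de * (de * SA)) = de ^+ 2 * (ga * SA) by ring.
by rewrite wAw /GRing.scale /=; ring.
Qed.

Lemma resolvent_energy_ge0 e : (forall x : 'rV_n, 0 <= (x *m A *m x^T) 0 0) ->
  0 <= de -> 0 <= ga -> 0 <= resolvent_energy e.
Proof.
move=> A_psd de_ge0 ga_ge0; rewrite addr_ge0 ?mulr_ge0 // mxE.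
by apply: sumr_ge0 => i _; rewrite [X in _ * X]mxE -expr2 sqr_ge0.
Qed.

Lemma sum_sign_resolvent_energy : de%:M + ga *: A \in unitmx ->
  \sum_(s : {ffun 'I_n -> bool}) resolvent_energy (sign_row s)
    = 2 ^+ n * (de * n%:R - de ^+ 2 * \tr Psi).
Proof.
move=> Bu; have mulmx1_tr (e : 'rV[R]_n) : e *m e^T = e *m 1%:M *m e^T by rewrite mulmx1.
under eq_bigr do rewrite resolvent_energyE // mulmx1_tr.
by rewrite sumrB -!mulr_sumr !sum_sign_quad_form mxtrace1; ring.
Qed.

Lemma sum_sign_resolvent_energy_le (mu : 'I_n -> R) :
  A^T = A -> (forall x : 'rV_n, 0 <= (x *m A *m x^T) 0 0) ->
  char_poly A = \prod_j ('X - (mu j)%:P) -> 0 < de -> 0 <= ga ->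
  \sum_(s : {ffun 'I_n -> bool}) resolvent_energy (sign_row s)
    <= 2 ^+ n * (Num.max ga 1 * \sum_j Num.min de (mu j)).
Proof.
move=> A_sym A_psd A_char de_gt0 ga_ge0.
have mu_ge0 := psd_eigenvalue_ge0 A_psd A_char.
have den_neq0 j : de + ga * mu j != 0 by rewrite gt_eqF // ltr_pwDl ?mulr_ge0.
have [Bu trPsi] := mxtrace_inv_shift A_sym A_char den_neq0.
rewrite sum_sign_resolvent_energy // ler_pM2l ?exprn_gt0 // /Psi trPsi.
have -> : de * n%:R = \sum_(j < n) de by rewrite sumr_const card_ord mulr_natr.
rewrite mulr_sumr -sumrB mulr_sumr.
by apply: ler_sum => j _; rewrite resolvent_term_le // ltW.
Qed.
End ResolventEnergy.

Section ReproducingKernel.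
Variables (R : realType) (Z : Type) (K : Z -> Z -> R) (HK : set (Z -> R))
  (ip : (Z -> R) -> (Z -> R) -> R).
Hypothesis K_rkhs : is_RKHS K HK ip.

Let HK0 : HK (fun=> 0).
Proof. by case: K_rkhs. Qed.
Let HKD f g : HK f -> HK g -> HK (fun z => f z + g z).
Proof. by case: K_rkhs => _ [+ _]; apply. Qed.
Let HKZ a f : HK f -> HK (fun z => a * f z).
Proof. by case: K_rkhs => _ [_ [+ _]]; apply. Qed.
Let ipC f g : HK f -> HK g -> ip f g = ip g f.
Proof. by case: K_rkhs => _ [_ [_ [+ _]]]; apply. Qed.
Let ipDl f g h : HK f -> HK g -> HK h -> ip (fun z => f z + g z) h = ip f h + ip g h.
Proof. by case: K_rkhs => _ [_ [_ [_ [+ _]]]]; apply. Qed.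
Let ipZl a f g : HK f -> HK g -> ip (fun z => a * f z) g = a * ip f g.
Proof. by case: K_rkhs => _ [_ [_ [_ [_ [+ _]]]]]; apply. Qed.
Let ip_ge0 f : HK f -> 0 <= ip f f.
Proof. by case: K_rkhs => _ [_ [_ [_ [_ [_ [+ _]]]]]]; apply. Qed.
Let HK_kernel z : HK (K z).
Proof. by case: K_rkhs => _ [_ [_ [_ [_ [_ [_ [_ [_ [+ _]]]]]]]]]. Qed.
Let ip_kernel f z : HK f -> ip f (K z) = f z.
Proof. by case: K_rkhs => _ [_ [_ [_ [_ [_ [_ [_ [_ [_ +]]]]]]]]]; apply. Qed.

Lemma sqr_normK f : HK f -> normK ip f ^+ 2 = ip f f.
Proof. by move=> f_in; rewrite sqr_sqrtr ?ip_ge0. Qed.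

Lemma rkhs_subr f g : HK f -> HK g -> HK (fun z => f z - g z).
Proof.
move=> f_in g_in; have -> : (fun z => f z - g z) = (fun z => f z + (-1) * g z).
  by apply: funext => z; rewrite mulN1r.
by apply: HKD => //; apply: HKZ.
Qed.

Lemma ip_sqr_le f g : HK f -> HK g -> ip f g ^+ 2 <= ip f f * ip g g.
Proof.
move=> f_in g_in; apply: discriminant_le => [|t]; first exact: ip_ge0.
pose tg z := t * g z; have tg_in : HK tg by exact: HKZ.
have ftg_in : HK (fun z => f z + tg z) by exact: HKD.
have := ip_ge0 ftg_in.
rewrite ipDl // (ipC f_in ftg_in) (ipC tg_in ftg_in) !ipDl // !ipZl //.
rewrite (ipC f_in tg_in) (ipC g_in tg_in) !ipZl // (ipC g_in f_in).
by congr (0 <= _); ring.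
Qed.

Lemma kernel_sym a b : K a b = K b a.
Proof. by rewrite -ip_kernel // ipC // ip_kernel. Qed.

Lemma rkhs_sum (I : Type) (r : seq I) (F : I -> Z -> R) :
  (forall i, HK (F i)) -> HK (fun z => \sum_(i <- r) F i z).
Proof.
move=> F_in; elim: r => [|a r IHr].
  by under [fun z => _]funext do rewrite big_nil; exact: HK0.
by under [fun z => _]funext do rewrite big_cons; apply: HKD.
Qed.

Lemma ip_suml (I : Type) (r : seq I) (F : I -> Z -> R) h :
  (forall i, HK (F i)) -> HK h ->
  ip (fun z => \sum_(i <- r) F i z) h = \sum_(i <- r) ip (F i) h.
Proof.
move=> F_in h_in; elim: r => [|a r IHr].
  under [fun z => _]funext do rewrite big_nil.
  have -> : (fun=> 0) = (fun z => 0 * h z) by apply: funext => z; rewrite mul0r.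
  by rewrite big_nil ipZl // mul0r.
under [fun z => _]funext do rewrite big_cons.
by rewrite ipDl ?big_cons ?IHr //; apply: rkhs_sum.
Qed.

Section KernelCombination.
Variables (n : nat) (zs : 'I_n -> Z) (c : 'I_n -> R).

Let g z := \sum_i c i * K (zs i) z.

Lemma rkhs_kernel_comb : HK g.
Proof. by apply: rkhs_sum => i; apply: HKZ. Qed.

Lemma ip_kernel_comb h : HK h -> ip g h = \sum_i c i * h (zs i).
Proof.
move=> h_in; rewrite (@ip_suml _ _ (fun i z => c i * K (zs i) z)) // => [|i]; last exact: HKZ.
by apply: eq_bigr => i _; rewrite ipZl // ipC // ip_kernel.
Qed.

Lemma ip_kernel_comb_self : ip g g = \sum_i \sum_j c i * c j * K (zs i) (zs j).
Proof.
rewrite ip_kernel_comb; last exact: rkhs_kernel_comb.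
apply: eq_bigr => i _.
by rewrite /g mulr_sumr; apply: eq_bigr => j _; rewrite mulrA kernel_sym.
Qed.

Lemma kernel_gram_ge0 : 0 <= \sum_i \sum_j c i * c j * K (zs i) (zs j).
Proof. by rewrite -ip_kernel_comb_self; apply/ip_ge0/rkhs_kernel_comb. Qed.

Lemma kernel_eval_sqr_le h : HK h ->
  (\sum_i c i * h (zs i)) ^+ 2 <= ip h h * \sum_i \sum_j c i * c j * K (zs i) (zs j).
Proof.
move=> h_in; have g_in := rkhs_kernel_comb.
by rewrite -ip_kernel_comb // -ip_kernel_comb_self ipC // ip_sqr_le.
Qed.

End KernelCombination.

Section EmpiricalKernel.
Variables (X : Type) (ghat : X -> Z) (n : nat) (Xs : 'I_n -> X).

Local Notation A := (Kmat K ghat Xs).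

Lemma Kmat_sym : A^T = A.
Proof. by apply/matrixP => i j; rewrite !mxE kernel_sym. Qed.

Lemma Kmat_quad_form (x y : 'rV_n) : (x *m A *m y^T) 0 0
  = n%:R^-1 * \sum_i \sum_j x 0 i * y 0 j * K (ghat (Xs i)) (ghat (Xs j)).
Proof.
rewrite quad_formE mulr_sumr; apply: eq_bigr => i _.
by rewrite mulr_sumr; apply: eq_bigr => j _; rewrite mxE mulrCA.
Qed.

Lemma Kmat_psd (x : 'rV_n) : 0 <= (x *m A *m x^T) 0 0.
Proof.
rewrite Kmat_quad_form mulr_ge0 ?invr_ge0 ?ler0n //.
exact: (kernel_gram_ge0 (fun i => ghat (Xs i)) (fun i => x 0 i)).
Qed.

Lemma split_eval_sqr_le (p r : 'rV_n) h (de ga : R) : (0 < n)%N -> HK h ->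
  ip h h <= 9 * ga -> \sum_i h (ghat (Xs i)) ^+ 2 <= n%:R * de ->
  (\sum_i (p + r) 0 i * h (ghat (Xs i))) ^+ 2
    <= 10 * n%:R * (de * (p *m p^T) 0 0 + ga * (r *m A *m r^T) 0 0).
Proof.
move=> n_gt0 h_in hh_le h_emp.
set a := \sum_i p 0 i * h (ghat (Xs i)); set b := \sum_i r 0 i * h (ghat (Xs i)).
have -> : \sum_i (p + r) 0 i * h (ghat (Xs i)) = a + b.
  by rewrite -big_split; apply: eq_bigr => i _; rewrite mxE mulrDl.
have ppE : (p *m p^T) 0 0 = \sum_i p 0 i ^+ 2.
  by rewrite mxE; apply: eq_bigr => i _; rewrite [X in _ * X]mxE expr2.
have pp_ge0 : 0 <= (p *m p^T) 0 0 by rewrite ppE sumr_ge0 // => i _; exact: sqr_ge0.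
have rAr_ge0 := Kmat_psd r.
have a_le : a ^+ 2 <= (p *m p^T) 0 0 * (n%:R * de).
  by apply: le_trans (sum_mul_sqr_le _ _) _; rewrite ppE ler_wpM2l -?ppE.
have b_le : b ^+ 2 <= 9 * ga * (n%:R * (r *m A *m r^T) 0 0).
  rewrite Kmat_quad_form mulVKf ?pnatr_eq0 -?lt0n //.
  apply: le_trans (kernel_eval_sqr_le _ (fun i => r 0 i) h_in) _.
  by rewrite ler_wpM2r // (kernel_gram_ge0 _ (fun i => r 0 i)).
(* (a + b)^2 <= 10 a^2 + 10/9 b^2 since 0 <= (9 a - b)^2 *)
have := sqr_ge0 (9 * a - b); nra.
Qed.

Lemma local_rademacher_le_energy fH (de : R) : (0 < n)%N -> HK fH ->
  (local_rademacher HK ip fH ghat Xs de <=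
   (2 ^- n * \sum_(s : {ffun 'I_n -> bool}) n%:R^-1 *
      Num.sqrt (10 * n%:R * resolvent_energy A de (ip fH fH) (sign_row s)))%:E)%E.
Proof.
move=> n_gt0 fH_in; rewrite /local_rademacher EFinM -sumEFin.
apply: lee_wpmul2l; first by rewrite lee_fin invr_ge0 exprn_ge0.
apply: lee_sum => s _; apply: ge_ereal_sup => _ [f [[f_in f_norm] f_emp] <-].
rewrite lee_fin ler_wpM2l ?invr_ge0 ?ler0n //; apply: ler_sqrt_sqr.
have h_in := rkhs_subr f_in fH_in.
have hh_le : ip (fun z => f z - fH z) (fun z => f z - fH z) <= 9 * ip fH fH.
  move: f_norm; rewrite /normK -ler_sqr ?nnegrE ?mulr_ge0 ?sqrtr_ge0 //.
  have fHfH_ge0 := ip_ge0 fH_in; have hh_ge0 := ip_ge0 h_in.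
  by rewrite exprMn !sqr_sqrtr // -natrX.
have h_emp : \sum_i (f (ghat (Xs i)) - fH (ghat (Xs i))) ^+ 2 <= n%:R * de.
  by move: f_emp; rewrite /En ler_pdivrMl ?ltr0n.
rewrite /resolvent_energy; set e := @sign_row R n s; set r := de *: _.
have -> : \sum_i sgn R (s i) * (f (ghat (Xs i)) - fH (ghat (Xs i)))
    = \sum_i (e - r + r) 0 i * (f (ghat (Xs i)) - fH (ghat (Xs i))).
  by rewrite subrK; apply: eq_bigr => i _; rewrite mxE.
exact: split_eval_sqr_le n_gt0 h_in hh_le h_emp.
Qed.
End EmpiricalKernel.
End ReproducingKernel.

Theorem lemma10 (R : realType) (dZ : measure_display) (Z : measurableType dZ)
    (dX : measure_display) (X : measurableType dX)
    (rho : probability Z R) (K : Z -> Z -> R)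
    (HK : set (Z -> R)) (ip : (Z -> R) -> (Z -> R) -> R)
    (mu : nat -> R) (phi : nat -> Z -> R)
    (fH : Z -> R) (ghat : X -> Z) :
  is_RKHS K HK ip ->
  assumption_A3 rho K mu phi ->
  HK fH ->
  measurable_fun setT ghat ->
  forall (n : nat) (Xs : 'I_n -> X) (muhat : 'I_n -> R),
    (0 < n)%N ->
    char_poly (Kmat K ghat Xs) = \prod_(j < n) ('X - (muhat j)%:P) ->
    (forall i j : 'I_n, (i <= j)%N -> muhat j <= muhat i) ->
    forall delta : R, 0 < delta ->
      (local_rademacher HK ip fH ghat Xs delta <=
       (Num.sqrt 10%:R * Num.max (normK ip fH) 1 * Rhat muhat delta)%:E)%E.
Proof.
move=> K_rkhs _ fH_in _ n Xs muhat n_gt0 A_char _ de de_gt0.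
have ga_ge0 : 0 <= ip fH fH by rewrite -(sqr_normK K_rkhs fH_in) sqr_ge0.
have A_psd := Kmat_psd K_rkhs ghat Xs.
have card_signs : #|{ffun 'I_n -> bool}| = (2 ^ n)%N.
  by rewrite card_ffun card_bool card_ord.
apply: le_trans (local_rademacher_le_energy K_rkhs ghat Xs de n_gt0 fH_in) _.
rewrite lee_fin -natrX -card_signs.
apply: mean_scaled_sqrtr_le => //; first by rewrite card_signs expn_gt0.
- by rewrite le_max ler01 orbT.
- by move=> s; apply: resolvent_energy_ge0 => //; exact: ltW.
rewrite sqr_max1 ?sqrtr_ge0 // (sqr_normK K_rkhs fH_in) card_signs natrX.
exact: sum_sign_resolvent_energy_le (Kmat_sym K_rkhs ghat Xs) A_psd A_char de_gt0 ga_ge0.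
Qed.
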